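(* Let $f:\mathbb{R}^d\to\mathbb{R}$ and $P:\mathbb{R}^d\to\mathbb{R}^s$ be continuously differentiable, $D\subseteq\mathbb{R}^s$ closed, $\Omega=\{z\mid P(z)\in D\}$, and let $\bar z\in\Omega$ be B-stationary for the problem $\min f(z)$ s.t. $P(z)\in D$. Assume that GGCQ holds at $\bar z$ and that the mapping $u\rightrightarrows\nabla P(\bar z)u-T_D(P(\bar z))$ is metrically subregular at $(0,0)$. Consider the program \[\min_{(u,y)\in\mathbb{R}^d\times\mathbb{R}^s}\ \langle\nabla f(\bar z),u\rangle+\tfrac12\|y\|^2\quad\text{subject to}\quad\nabla P(\bar z)u+y\in T_D(P(\bar z)).\tag{A}\] Then: the mapping $(u,y)\rightrightarrows\nabla P(\bar z)u+y-T_D(P(\bar z))$ is metrically subregular at $((\bar u,\bar y),0)$ for every point $(\bar u,\bar y)$ feasible for (A); the program (A) is bounded below; and for every B-stationary solution $(\bar u,\bar y)$ of (A) there is a multiplier $w^\ast\in\widehat N_{T_D(P(\bar z))}(\nabla P(\bar z)\bar u+\bar y)$ such that \[\nabla f(\bar z)+\nabla P(\bar z)^\ast w^\ast=0,\qquad\bar y+w^\ast=0.\]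
   Context: Tangent cone $T_\Omega(\bar z)=\{w\mid \exists t_k\downarrow0,\ w_k\to w,\ \bar z+t_kw_k\in\Omega\}$; polar cone $K^\ast=\{z^\ast\mid\langle z^\ast,w\rangle\le0\ \forall w\in K\}$; regular normal cone $\widehat N_\Omega(\bar z)=(T_\Omega(\bar z))^\ast$. Linearized tangent cone $T^{\rm lin}_{P,D}(\bar z)=\{u\mid\nabla P(\bar z)u\in T_D(P(\bar z))\}$. For a problem of minimizing a $C^1$ function $h$ over a closed set $S$, a feasible point $\bar x$ is B-stationary if $0\in\nabla h(\bar x)+\widehat N_S(\bar x)$. GGCQ holds at $\bar z$ if $\widehat N_\Omega(\bar z)=(T^{\rm lin}_{P,D}(\bar z))^\ast$. A mapping $M$ is metrically subregular at $(\bar z,\bar w)\in\operatorname{gph}M$ if there are a neighborhood $W$ of $\bar z$ and $\kappa>0$ with $\operatorname{dist}(z,M^{-1}(\bar w))\le\kappa\operatorname{dist}(\bar w,M(z))$ for $z\in W$. *)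

From HB Require Import structures.
From mathcomp Require Import all_boot all_order all_algebra.
From mathcomp Require Import all_classical all_reals all_analysis.
Set Implicit Arguments. Unset Strict Implicit. Unset Printing Implicit Defensive.
Import Order.TTheory GRing.Theory Num.Theory.
Import numFieldNormedType.Exports.
Local Open Scope classical_set_scope.
Local Open Scope ring_scope.

Section Defs.
Variable R : realType.

Definition dotv n (u v : 'rV[R]_n) : R := \sum_(i < n) u 0 i * v 0 i.
Definition enorm n (u : 'rV[R]_n) : R := Num.sqrt (dotv u u).

(* Euclidean distance from a point to a set (+oo for the empty set) *)
Definition edist n (x : 'rV[R]_n) (S : set 'rV[R]_n) : \bar R :=
  ereal_inf [set (enorm (x - y))%:E | y in S].

(* gradient of a scalar function and Jacobian (as a d x s matrix acting on
   row vectors: P'(z) u = u *m jac P z) via the Frechet derivative 'd *)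
Definition grad d (f : 'rV[R]_d -> R) (z : 'rV[R]_d) : 'rV[R]_d :=
  \row_j ('d f z (delta_mx 0 j)).
Definition jac d s (P : 'rV[R]_d -> 'rV[R]_s) (z : 'rV[R]_d) : 'M[R]_(d, s) :=
  \matrix_(j, i) ('d P z (delta_mx 0 j)) 0 i.

Definition C1_scalar d (f : 'rV[R]_d -> R) : Prop :=
  (forall z, differentiable f z) /\ continuous (grad f).
Definition C1_map d s (P : 'rV[R]_d -> 'rV[R]_s) : Prop :=
  (forall z, differentiable P z) /\ continuous (jac P).

Definition tangent_cone n (A : set 'rV[R]_n) (z : 'rV[R]_n) : set 'rV[R]_n :=
  [set w | exists (t : nat -> R) (wk : nat -> 'rV[R]_n),
     (forall k, 0 < t k) /\ (forall k, t k.+1 <= t k) /\ t @ \oo --> 0 /\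
     wk @ \oo --> w /\ (forall k, A (z + t k *: wk k))].

Definition polar n (K : set 'rV[R]_n) : set 'rV[R]_n :=
  [set zs | forall w, K w -> dotv zs w <= 0].

Definition reg_normal n (A : set 'rV[R]_n) (z : 'rV[R]_n) : set 'rV[R]_n :=
  polar (tangent_cone A z).

Definition lin_tangent_cone d s (P : 'rV[R]_d -> 'rV[R]_s) (D : set 'rV[R]_s)
  (z : 'rV[R]_d) : set 'rV[R]_d :=
  [set u | tangent_cone D (P z) (u *m jac P z)].

Definition B_stationary n (h : 'rV[R]_n -> R) (S : set 'rV[R]_n) (x : 'rV[R]_n) : Prop :=
  S x /\ reg_normal S x (- grad h x).

Definition GGCQ d s (P : 'rV[R]_d -> 'rV[R]_s) (D : set 'rV[R]_s) (z : 'rV[R]_d) : Prop :=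
  reg_normal [set x | D (P x)] z = polar (lin_tangent_cone P D z).

Definition metric_subregular m n (M : 'rV[R]_m -> set 'rV[R]_n)
  (zb : 'rV[R]_m) (wb : 'rV[R]_n) : Prop :=
  M zb wb /\
  exists (W : set 'rV[R]_m) (kappa : R), nbhs zb W /\ 0 < kappa /\
    forall z, W z ->
      (edist z [set z' | M z' wb] <= kappa%:E * edist wb (M z))%E.

End Defs.

From Pilot Require Import Defs.
From HB Require Import structures.
From mathcomp Require Import all_boot all_order all_algebra.
From mathcomp Require Import all_classical all_reals all_analysis.
From mathcomp Require Import ring lra.
Set Implicit Arguments. Unset Strict Implicit. Unset Printing Implicit Defensive.
Import Order.TTheory GRing.Theory Num.Theory.
Import numFieldNormedType.Exports.
Local Open Scope classical_set_scope.
Local Open Scope ring_scope.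

(* T := T_D(P zb) is a cone, so the local error bound given by metric
   subregularity of u |-> uA - T at the origin becomes global after rescaling:
   every u with uA + y in T lies within kappa |y| + 1 of some u' with u'A in T.
   By B-stationarity and GGCQ, g = grad f zb is nonnegative on such u', hence
   <g, u> >= - C (kappa |y| + 1) with C = sum_i |g_i|, and the objective of (A)
   is bounded below by a quadratic in |y|.  The slack map (u, y) |-> uA + y - T
   is subregular with modulus 1 because changing y alone reaches T.  The
   multiplier is w* = - y: test B-stationarity of (A) against the directions
   (0, t), t tangent to T, and (v, - vA), along which the feasible set of (A)
   is invariant. *)

Section Euclidean.
Variable R : realType.

Lemma dotvC n (u v : 'rV[R]_n) : dotv u v = dotv v u.
Proof. by apply: eq_bigr => i _; rewrite mulrC. Qed.

Lemma dotvDr n (u v w : 'rV[R]_n) : dotv u (v + w) = dotv u v + dotv u w.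
Proof. by rewrite /dotv -big_split; apply: eq_bigr => i _; rewrite mxE mulrDr. Qed.

Lemma dotvDl n (u v w : 'rV[R]_n) : dotv (v + w) u = dotv v u + dotv w u.
Proof. by rewrite dotvC dotvDr !(dotvC u). Qed.

Lemma dotvZr n a (u v : 'rV[R]_n) : dotv u (a *: v) = a * dotv u v.
Proof. by rewrite /dotv mulr_sumr; apply: eq_bigr => i _; rewrite mxE mulrCA. Qed.

Lemma dotvZl n a (u v : 'rV[R]_n) : dotv (a *: v) u = a * dotv v u.
Proof. by rewrite dotvC dotvZr dotvC. Qed.

Lemma dotvNr n (u v : 'rV[R]_n) : dotv u (- v) = - dotv u v.
Proof. by rewrite -scaleN1r dotvZr mulN1r. Qed.

Lemma dotvNl n (u v : 'rV[R]_n) : dotv (- v) u = - dotv v u.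
Proof. by rewrite dotvC dotvNr dotvC. Qed.

Lemma dotv0r n (u : 'rV[R]_n) : dotv u 0 = 0.
Proof. by rewrite -(scale0r 0) dotvZr mul0r. Qed.

Lemma dotv_ge0 n (u : 'rV[R]_n) : 0 <= dotv u u.
Proof. by apply: sumr_ge0 => i _; rewrite -expr2 sqr_ge0. Qed.

Lemma dotv_delta n (u : 'rV[R]_n) j : dotv u (delta_mx 0 j) = u 0 j.
Proof.
rewrite /dotv (bigD1 j) //= big1 ?addr0 => [|i /negbTE ij]; rewrite mxE eqxx /=.
  by rewrite eqxx mulr1.
by rewrite ij mulr0.
Qed.

Lemma dotv_row_mx n1 n2 (u u' : 'rV[R]_n1) (y y' : 'rV[R]_n2) :
  dotv (row_mx u y) (row_mx u' y') = dotv u u' + dotv y y'.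
Proof.
by rewrite /dotv big_split_ord /=; congr (_ + _); apply: eq_bigr => i _;
  rewrite ?row_mxEl ?row_mxEr.
Qed.

Lemma dotv_mulmx n m (y : 'rV[R]_n) (v : 'rV[R]_m) (A : 'M[R]_(m, n)) :
  dotv y (v *m A) = dotv (y *m A^T) v.
Proof.
rewrite /dotv; under eq_bigr => i _ do rewrite mxE mulr_sumr.
rewrite exchange_big /=; apply: eq_bigr => j _.
by rewrite mxE mulr_suml; apply: eq_bigr => i _; rewrite !mxE mulrAC mulrA.
Qed.

Lemma dotv_ge0_eq0 n (a : 'rV[R]_n) : (forall v, 0 <= dotv a v) -> a = 0.
Proof.
move=> a_ge0; apply/rowP => j; apply/eqP; rewrite mxE eq_le.
have := a_ge0 (- delta_mx 0 j); have := a_ge0 (delta_mx 0 j).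
by rewrite dotvNr !dotv_delta oppr_ge0 => -> ->.
Qed.

Lemma dotv_ge_sum_norm n (g w : 'rV[R]_n) :
  - ((\sum_(i < n) `|g 0 i|) * enorm w) <= dotv g w.
Proof.
rewrite mulr_suml /dotv -sumrN; apply: ler_sum => i _.
rewrite lerNl; apply: (le_trans (ler_norm _)); rewrite normrN normrM.
apply: ler_wpM2l => //; rewrite -sqrtr_sqr; apply: ler_wsqrtr.
rewrite /dotv (bigD1 i) //= -expr2 lerDl.
by apply: sumr_ge0 => j _; rewrite -expr2 sqr_ge0.
Qed.

Lemma enorm_sqr n (u : 'rV[R]_n) : enorm u ^+ 2 = dotv u u.
Proof. by rewrite sqr_sqrtr // dotv_ge0. Qed.

Lemma enormZ n a (u : 'rV[R]_n) : enorm (a *: u) = `|a| * enorm u.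
Proof. by rewrite /enorm dotvZl dotvZr mulrA sqrtrM ?sqr_ge0 // sqrtr_sqr. Qed.

Lemma enormN n (u : 'rV[R]_n) : enorm (- u) = enorm u.
Proof. by rewrite -scaleN1r enormZ normrN1 mul1r. Qed.

Lemma enorm_row0 n1 n2 (y : 'rV[R]_n2) : enorm (row_mx (0 : 'rV[R]_n1) y) = enorm y.
Proof. by rewrite /enorm dotv_row_mx dotv0r add0r. Qed.

Lemma edist_le_enorm n (x y : 'rV[R]_n) (S : set 'rV[R]_n) :
  S y -> (Defs.edist x S <= (enorm (x - y))%:E)%E.
Proof. by move=> Sy; apply: ereal_inf_lbound; exists y. Qed.

Lemma edist_lt n (x : 'rV[R]_n) (S : set 'rV[R]_n) r :
  (Defs.edist x S < r%:E)%E -> exists2 y, S y & enorm (x - y) < r.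
Proof. by case/ereal_inf_lt => _ [y Sy <-]; rewrite lte_fin; exists y. Qed.

Lemma edist_le_edist m n (x : 'rV[R]_m) (S : set 'rV[R]_m)
    (z : 'rV[R]_n) (B : set 'rV[R]_n) :
  (forall y, B y -> exists2 y', S y' & enorm (x - y') <= enorm (z - y)) ->
  (Defs.edist x S <= Defs.edist z B)%E.
Proof.
move=> near_S; apply: le_ereal_inf_tmp => _ [y By <-].
have [y' Sy' le_y'] := near_S y By.
by apply: le_trans (edist_le_enorm x Sy') _; rewrite lee_fin.
Qed.

End Euclidean.

Section TangentCone.
Variable R : realType.

Lemma tangent_coneZ n (S : set 'rV[R]_n) z w l :
  0 < l -> tangent_cone S z w -> tangent_cone S z (l *: w).
Proof.
move=> l_gt0 [t [wk [t_gt0 [t_dec [t_cvg [wk_cvg Swk]]]]]].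
exists (fun k => t k / l), (fun k => l *: wk k); split.
  by move=> k; rewrite divr_gt0.
split; first by move=> k; rewrite ler_pM2r ?invr_gt0.
split; first by rewrite -(mul0r l^-1); apply: cvgMr_tmp.
split; first exact: cvgZl_tmp.
by move=> k; rewrite scalerA mulrVK ?unitfE ?gt_eqF.
Qed.

Lemma tangent_cone_ray n (S : set 'rV[R]_n) z w :
  (forall t, 0 < t -> S (z + t *: w)) -> tangent_cone S z w.
Proof.
move=> Sray; exists harmonic, (fun=> w); split; first exact: harmonic_gt0.
split; first by move=> k; rewrite /= lef_pV2 ?ler_nat ?posrE // ltr0n.
split; first exact: cvg_harmonic.
by split; [exact: cvg_cst | move=> k; exact/Sray/harmonic_gt0].
Qed.

Lemma continuous_row_mx0 m n1 n2 :
  continuous (fun v : 'M[R]_(m, n2) => row_mx (0 : 'M[R]_(m, n1)) v).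
Proof.
move=> u A /nbhs_ballP[e /= e0 eA].
apply/nbhs_ballP; exists e => //= v [_ uv]; apply: eA; split => // i j.
rewrite -[j]splitK; case: (fintype.split j) => k /=.
  by rewrite !row_mxEl; apply: ballxx.
by rewrite !row_mxEr; apply: uv.
Qed.

Lemma tangent_cone_slack_row0 d s (T : set 'rV[R]_s) (A : 'M[R]_(d, s)) x t :
  tangent_cone T (lsubmx x *m A + rsubmx x) t ->
  tangent_cone [set x | T (lsubmx x *m A + rsubmx x)] x (row_mx 0 t).
Proof.
move=> [tk [wk [t_gt0 [t_dec [t_cvg [wk_cvg Twk]]]]]].
exists tk, (fun k => row_mx 0 (wk k)); do 3!split => //.
split.
  by apply: (cvg_comp wk (fun v => row_mx 0 v) wk_cvg); exact: continuous_row_mx0.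
by move=> k /=; rewrite !linearD !linearZ /= row_mxKl row_mxKr scaler0 addr0 addrA.
Qed.

End TangentCone.

Section Differential.
Variable R : realType.

Lemma dotv_grad n (h : 'rV[R]_n -> R) x w : dotv (grad h x) w = 'd h x w.
Proof.
rewrite {2}(row_sum_delta w) linear_sum /dotv; apply: eq_bigr => j _.
by rewrite mxE linearZ /= mulrC.
Qed.

Lemma differentiable_dotv m n (p q : 'rV[R]_m -> 'rV[R]_n) x :
  differentiable p x -> differentiable q x ->
  differentiable (fun z => dotv (p z) (q z)) x.
Proof.
move=> dp dq.
have -> : (fun z => dotv (p z) (q z)) = \sum_(i < n) (fun z => p z 0 i * q z 0 i).
  by rewrite fct_sumE; apply/funext => z.
apply: (@differentiable_sum R _ R^o n (fun i z => p z 0 i * q z 0 i)) => i.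
have coord (r : 'rV[R]_m -> 'rV[R]_n) : differentiable r x ->
    differentiable (fun z => r z 0 i) x.
  by move=> dr; apply: (@differentiable_comp _ _ _ R^o r (fun N : 'rV[R]_n => N 0 i))
    => //; exact: differentiable_coord.
exact: differentiableM (coord _ dp) (coord _ dq).
Qed.

Lemma diff_quadratic_ray n (h : 'rV[R]_n -> R) x w a b :
  differentiable h x -> (forall t, h (t *: w + x) = h x + t * a + t ^+ 2 * b) ->
  'd h x w = a.
Proof.
move=> dh h_ray; rewrite -deriveE //; apply: cvg_lim => //.
have lim_a : (fun t : R => a + t * b) @ 0^' --> a.
  apply: cvg_trans (cvg_app _ (@nbhs_dnbhs _ 0)) _.
  rewrite -[X in _ --> X]addr0; apply: cvgD; first exact: cvg_cst.
  by have := @cvgMr_tmp R R (nbhs (0:R)) _ id 0 b cvg_id; rewrite mul0r; apply.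
apply: cvg_trans lim_a; apply: near_eq_cvg; near=> t.
have t_neq0 : t != 0 by near: t; exact: nbhs_dnbhs_neq.
rewrite /= h_ray /GRing.scale /=; field; exact: t_neq0.
Unshelve. all: by end_near.
Qed.

End Differential.

Lemma B_stationary_GGCQ_polar (R : realType) d s (f : 'rV[R]_d -> R)
    (P : 'rV[R]_d -> 'rV[R]_s) (D : set 'rV[R]_s) z :
  B_stationary f [set x | D (P x)] z -> GGCQ P D z ->
  forall u, lin_tangent_cone P D z u -> 0 <= dotv (grad f z) u.
Proof.
move=> [_ normal] GGCQz u Tu; move: normal; rewrite GGCQz => /(_ u Tu).
by rewrite dotvNl oppr_le0.
Qed.

Section SlackProblem.
Variables (R : realType) (d s : nat) (T : set 'rV[R]_s) (A : 'M[R]_(d, s)).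

Lemma slack_map_subregular xb :
  T (lsubmx xb *m A + rsubmx xb) ->
  metric_subregular (fun x : 'rV[R]_(d + s) =>
    [set v | exists t, T t /\ v = lsubmx x *m A + rsubmx x - t]) xb 0.
Proof.
move=> Txb; split; first by exists (lsubmx xb *m A + rsubmx xb); rewrite subrr.
exists setT, 1; split; first exact: filterT.
split=> // x _; rewrite mul1e; apply: edist_le_edist => _ [t [Tt ->]].
exists (row_mx (lsubmx x) (t - lsubmx x *m A)).
  by exists t; rewrite row_mxKl row_mxKr addrCA subrr addr0 subrr.
rewrite -{1}(hsubmxK x) opp_row_mx add_row_mx subrr enorm_row0 sub0r enormN.
by rewrite opprB addrCA addrA.
Qed.

Hypothesis T_cone : forall l t, 0 < l -> T t -> T (l *: t).

Lemma cone_subregular_error_bound :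
  metric_subregular
    (fun u : 'rV[R]_d => [set v | exists t, T t /\ v = u *m A - t]) 0 0 ->
  exists kappa : R, forall u y e, 0 < e -> T (u *m A + y) ->
    exists2 u', T (u' *m A) & enorm (u - u') < kappa * enorm y + e.
Proof.
move=> [_ [W [k [W0 [k_gt0 subreg]]]]]; exists k => u y e e_gt0 Tuy.
have [l l_gt0 Wlu] : exists2 l, 0 < l & W (l *: u).
  have /nbhs_ballP[r /= r_gt0 Wr] : nbhs (0 : R) (fun l => W (l *: u)).
    by apply: scalel_continuous; rewrite /= scale0r.
  exists (r / 2); first by rewrite divr_gt0.
  by apply: Wr; rewrite /ball /= sub0r normrN gtr0_norm ?divr_gt0 //; lra.
have Mlu : [set v | exists t, T t /\ v = l *: u *m A - t] (- (l *: y)).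
  exists (l *: (u *m A + y)); split; first exact: T_cone.
  by rewrite scalerDr scalemxAl opprD addrA subrr sub0r.
have dist_lu :
    (Defs.edist (l *: u) [set u' | exists t, T t /\ (0 = u' *m A - t)%R]
     < (l * (k * enorm y + e))%:E)%E.
  apply: le_lt_trans (subreg _ Wlu) _.
  apply: le_lt_trans (lee_wpmul2l (ltW (k_gt0 : (0 < k%:E)%E)) (edist_le_enorm 0 Mlu)) _.
  rewrite sub0r opprK enormZ gtr0_norm // -EFinM lte_fin; nra.
have [u'' [t [Tt /esym/subr0_eq u''A_eq]] lt_u''] := edist_lt dist_lu.
exists (l^-1 *: u'').
  by rewrite -scalemxAl u''A_eq; apply: T_cone; rewrite ?invr_gt0.
have -> : enorm (u - l^-1 *: u'') = l^-1 * enorm (l *: u - u'').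
  have linv_gt0 : 0 < l^-1 by rewrite invr_gt0.
  by rewrite -{2}(gtr0_norm linv_gt0) -enormZ scalerBr scalerA mulVf ?gt_eqF // scale1r.
by rewrite ltr_pdivrMl.
Qed.

Lemma slack_objective_bounded (g : 'rV[R]_d) :
  metric_subregular
    (fun u : 'rV[R]_d => [set v | exists t, T t /\ v = u *m A - t]) 0 0 ->
  (forall u, T (u *m A) -> 0 <= dotv g u) ->
  exists m : R, forall u y, T (u *m A + y) -> m <= dotv g u + 2^-1 * dotv y y.
Proof.
move=> /cone_subregular_error_bound[k bound] g_polar.
pose C := \sum_(i < d) `|g 0 i|.
have C_ge0 : 0 <= C by apply: sumr_ge0.
exists (- C - 2^-1 * (C * k) ^+ 2) => u y Tuy.
have [u' Tu' near_u'] := bound u y 1 ltr01 Tuy.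
have gu_ge : - (C * (k * enorm y + 1)) <= dotv g u.
  have := dotv_ge_sum_norm g (u - u'); have := g_polar _ Tu'.
  have : C * enorm (u - u') <= C * (k * enorm y + 1) by rewrite ler_wpM2l // ltW.
  have -> : dotv g u = dotv g (u - u') + dotv g u' by rewrite -dotvDr subrK.
  rewrite -/C; lra.
rewrite -enorm_sqr; have := sqr_ge0 (enorm y - C * k); nra.
Qed.

Lemma dotv_grad_slack_objective (g : 'rV[R]_d) x w :
  dotv (grad (fun x : 'rV[R]_(d + s) =>
                dotv g (lsubmx x) + 2^-1 * dotv (rsubmx x) (rsubmx x)) x) w
  = dotv g (lsubmx w) + dotv (rsubmx x) (rsubmx w).
Proof.
rewrite dotv_grad; apply: (diff_quadratic_ray (b := 2^-1 * dotv (rsubmx w) (rsubmx w))).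
  apply: (@differentiableD _ _ R^o (fun x => dotv g (lsubmx x))
                                  (fun x => 2^-1 * dotv (rsubmx x) (rsubmx x))).
    exact: (differentiable_dotv (differentiable_cst g x) (differentiable_lsubmx x)).
  apply: (@differentiableM _ _ (cst 2^-1)); first exact: differentiable_cst.
  exact: (differentiable_dotv (differentiable_rsubmx x) (differentiable_rsubmx x)).
move=> t; rewrite !linearD !linearZ /= !dotvDr !dotvDl !dotvZl !dotvZr.
by rewrite (dotvC (rsubmx w)); field.
Qed.

Lemma slack_B_stationary_multiplier (g : 'rV[R]_d) xb :
  B_stationary (fun x : 'rV[R]_(d + s) =>
                  dotv g (lsubmx x) + 2^-1 * dotv (rsubmx x) (rsubmx x))
    [set x | T (lsubmx x *m A + rsubmx x)] xb ->
  reg_normal T (lsubmx xb *m A + rsubmx xb) (- rsubmx xb) /\ g = rsubmx xb *m A^T.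
Proof.
move=> [Fxb stat].
have descent w : tangent_cone [set x | T (lsubmx x *m A + rsubmx x)] xb w ->
    0 <= dotv g (lsubmx w) + dotv (rsubmx xb) (rsubmx w).
  by move/stat; rewrite dotvNl dotv_grad_slack_objective oppr_le0.
split=> [t /tangent_cone_slack_row0/descent|].
  by rewrite row_mxKl row_mxKr dotv0r add0r dotvNl oppr_le0.
apply/eqP; rewrite -subr_eq0; apply/eqP/dotv_ge0_eq0 => v.
have /descent : tangent_cone [set x | T (lsubmx x *m A + rsubmx x)] xb
                  (row_mx v (- (v *m A))).
  apply: tangent_cone_ray => l _ /=; rewrite !linearD !linearZ /= row_mxKl row_mxKr.
  by rewrite mulmxDl -scalemxAl scalerN addrACA subrr addr0.
by rewrite row_mxKl row_mxKr dotvNr dotv_mulmx dotvDl dotvNl.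
Qed.

End SlackProblem.

(* A pair (u, y) in R^d x R^s is represented by row_mx u y : 'rV_(d + s),
   with u = lsubmx x, y = rsubmx x. *)
Theorem lemma4p6 (R : realType) (d s : nat)
  (f : 'rV[R]_d -> R) (P : 'rV[R]_d -> 'rV[R]_s) (D : set 'rV[R]_s)
  (zb : 'rV[R]_d) :
  C1_scalar f -> C1_map P -> closed D ->
  B_stationary f [set z | D (P z)] zb ->
  GGCQ P D zb ->
  metric_subregular
    (fun u : 'rV[R]_d => [set v | exists t, tangent_cone D (P zb) t /\
                                   v = u *m jac P zb - t]) 0 0 ->
  let TD := tangent_cone D (P zb) in
  let A := jac P zb in
  let g := grad f zb in
  let feasA := [set x : 'rV[R]_(d + s) | TD (lsubmx x *m A + rsubmx x)] in
  let objA := fun x : 'rV[R]_(d + s) =>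
                dotv g (lsubmx x) + 2^-1 * dotv (rsubmx x) (rsubmx x) in
  (forall xb, feasA xb ->
     metric_subregular
       (fun x : 'rV[R]_(d + s) => [set v | exists t, TD t /\
                                   v = lsubmx x *m A + rsubmx x - t]) xb 0)
  /\ (exists m : R, forall x, feasA x -> m <= objA x)
  /\ (forall xb, B_stationary objA feasA xb ->
        exists ws : 'rV[R]_s,
          reg_normal TD (lsubmx xb *m A + rsubmx xb) ws /\
          g + ws *m A^T = 0 /\ rsubmx xb + ws = 0).
Proof.
move=> _ _ _ f_stat GGCQ_zb subreg TD A g feasA objA.
have TD_cone l t : 0 < l -> TD t -> TD (l *: t) by exact: tangent_coneZ.
have g_polar := B_stationary_GGCQ_polar f_stat GGCQ_zb.
split; first exact: slack_map_subregular.
split.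
  have [m m_lb] := slack_objective_bounded TD_cone subreg g_polar.
  by exists m => x /m_lb.
move=> xb /slack_B_stationary_multiplier[normal g_eq].
by exists (- rsubmx xb); rewrite g_eq mulNmx !subrr.
Qed.
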